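(* Let $Y$ be a nominal $\mathrm{Sb}$-set and let $y\in Y$ be supported by a set of cardinality at most $1$. Then $\{m\cdot y\mid m\in\mathrm{Sb}\}=\{g\cdot y\mid g\in\mathrm{Perm}\}$.
   Context: $\mathbb{A}$ is a countably infinite set of atoms; $\mathrm{Sb}$ is the monoid of functions $\mathbb{A}\to\mathbb{A}$ that are the identity outside a finite set; $\mathrm{Perm}\subseteq\mathrm{Sb}$ its bijections. An $\mathrm{Sb}$-set has a monoid action of $\mathrm{Sb}$; $C\subseteq\mathbb{A}$ supports $y$ if for all $m_1,m_2\in\mathrm{Sb}$ with $m_1|_C=m_2|_C$ we have $m_1y=m_2y$; a nominal $\mathrm{Sb}$-set is one in which every element has a finite support. *)

From mathcomp Require Import all_boot.
Set Implicit Arguments. Unset Strict Implicit. Unset Printing Implicit Defensive.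

Definition atom := nat.

Definition is_sb (m : atom -> atom) : Prop :=
  exists s : seq atom, forall a, a \notin s -> m a = a.

Definition is_perm (m : atom -> atom) : Prop := is_sb m /\ bijective m.

Record SbSet := {
  sb_carrier :> Type;
  sb_act : (atom -> atom) -> sb_carrier -> sb_carrier;
  sb_act_id : forall y, sb_act id y = y;
  sb_act_comp : forall m1 m2 y, is_sb m1 -> is_sb m2 ->
     sb_act (m1 \o m2) y = sb_act m1 (sb_act m2 y)
}.

Definition supports (Y : SbSet) (C : atom -> Prop) (y : Y) : Prop :=
  forall m1 m2, is_sb m1 -> is_sb m2 ->
    (forall a, C a -> m1 a = m2 a) -> sb_act m1 y = sb_act m2 y.

Definition nominal (Y : SbSet) : Prop :=
  forall y : Y, exists s : seq atom, supports (fun a => a \in s) y.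

Definition card_le1 (C : atom -> Prop) : Prop :=
  forall a b, C a -> C b -> a = b.

(* A substitution m moves the at most one atom a supporting y to m a, and so
   does the transposition of a and m a; since y is supported by {a}, both act
   on y in the same way.  If no atom supports y, then y is fixed by every
   substitution and the identity permutation will do. *)
From Stdlib Require Import Classical.
From mathcomp Require Import all_boot.

Definition transp (a b : atom) (x : atom) : atom :=
  if x == a then b else if x == b then a else x.

Lemma transpL a b : transp a b a = b.
Proof. by rewrite /transp eqxx. Qed.

Lemma transpK a b : involutive (transp a b).
Proof.
move=> x; rewrite /transp.
have [-> | xa] := eqVneq x a; first by rewrite eqxx; case: eqVneq.
have [-> | xb] := eqVneq x b; first by rewrite eqxx.
by rewrite (negPf xa) (negPf xb).
Qed.

Lemma is_sb_id : is_sb id.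
Proof. by exists [::]. Qed.

Lemma is_perm_id : is_perm id.
Proof. by split; [exact: is_sb_id | exists id]. Qed.

Lemma is_perm_transp a b : is_perm (transp a b).
Proof.
split; last exact: Bijective (transpK a b) (transpK a b).
exists [:: a; b] => x; rewrite !inE negb_or => /andP [xa xb].
by rewrite /transp (negPf xa) (negPf xb).
Qed.

Lemma act_sb_perm_le1 (Y : SbSet) (C : atom -> Prop) (y : Y) m :
  card_le1 C -> supports C y -> is_sb m ->
  exists g, is_perm g /\ sb_act m y = sb_act g y.
Proof.
move=> C_le1 suppy sb_m.
have [[a Ca] | noC] := classic (exists a, C a).
  exists (transp a (m a)); split; first exact: is_perm_transp.
  apply: suppy => //; first by case: (is_perm_transp a (m a)).
  by move=> x Cx; rewrite (C_le1 _ _ Cx Ca) transpL.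
exists id; split; first exact: is_perm_id.
apply: suppy => // [|x Cx]; first exact: is_sb_id.
by case: noC; exists x.
Qed.

Theorem mainTheorem13 (Y : SbSet) (hY : nominal Y) (y : Y)
  (C : atom -> Prop) (hC : card_le1 C) (hsupp : supports C y) :
  forall z : Y,
    (exists m, is_sb m /\ z = sb_act m y) <->
    (exists g, is_perm g /\ z = sb_act g y).
Proof.
move=> z; split => [[m [sb_m ->]] | [g [[sb_g _] ->]]]; last by exists g.
exact: act_sb_perm_le1 hC hsupp sb_m.
Qed.
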